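(* For every $\alpha\ge 1$ there exists a chore allocation instance (with three agents and monotone cost functions) that admits a maximin share fair allocation but admits no $\alpha$-EFX allocation. That is, the existence of an MMS allocation does not imply the existence of an $\alpha$-EFX allocation for any $\alpha \ge 1$.
   Context: A chore allocation instance consists of a set $N=\{1,\dots,n\}$ of agents, a finite set $M$ of chores, and for each agent $i$ a normalized ($c_i(\emptyset)=0$), monotone ($c_i(S\cup\{e\})\ge c_i(S)$) cost function $c_i:2^M\to\mathbb{R}_{\ge0}$. An allocation is a partition $X=(X_1,\dots,X_n)$ of $M$ with agent $i$ receiving $X_i$. For $\alpha\ge1$, $X$ is $\alpha$-EFX if for all agents $i,j$ and every $e\in X_i$, $c_i(X_i\setminus\{e\})\le\alpha\cdot c_i(X_j)$. The maximin share of agent $i$ is $\mu_i^n(M)=\min_{Y\in\Pi_n(M)}\max_{k\in[n]} c_i(Y_k)$, where $\Pi_n(M)$ is the set of partitions of $M$ into $n$ bundles; an allocation $X$ is maximin share fair (MMS) if $c_i(X_i)\le \mu_i^n(M)$ for every agent $i$. *)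

From HB Require Import structures.
From mathcomp Require Import all_boot all_order all_algebra.
From mathcomp Require Import reals.
Set Implicit Arguments. Unset Strict Implicit. Unset Printing Implicit Defensive.
Import Order.TTheory GRing.Theory Num.Theory.
Local Open Scope ring_scope.

Section ChoreDefs.
Variables (R : realType) (M : finType) (n : nat).

Definition valid_costs (c : 'I_n -> {set M} -> R) : Prop :=
  forall i : 'I_n,
    [/\ c i set0 = 0,
        (forall S : {set M}, 0 <= c i S) &
        (forall (S : {set M}) (e : M), c i S <= c i (e |: S))].

Definition is_partition (X : 'I_n -> {set M}) : Prop :=
  (forall i j : 'I_n, i != j -> [disjoint X i & X j]) /\
  \bigcup_(i < n) X i = [set: M].

Definition alpha_EFX (alpha : R) (c : 'I_n -> {set M} -> R)
    (X : 'I_n -> {set M}) : Prop :=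
  forall (i j : 'I_n) (e : M), e \in X i -> c i (X i :\ e) <= alpha * c i (X j).

(* c_i(S) <= mu_i^n(M) = min over partitions Y of max_k c_i(Y_k),
   written as "c_i(S) <= max_k c_i(Y_k) for every partition Y"
   (the max is taken with initial value 0, harmless since costs are >= 0). *)
Definition le_mms (c : 'I_n -> {set M} -> R) (i : 'I_n) (v : R) : Prop :=
  forall Y : 'I_n -> {set M}, is_partition Y ->
    v <= \big[Num.max/0]_(k < n) c i (Y k).

Definition is_MMS (c : 'I_n -> {set M} -> R) (X : 'I_n -> {set M}) : Prop :=
  forall i : 'I_n, le_mms c i (c i (X i)).

End ChoreDefs.

From mathcomp Require Import all_boot all_order all_algebra.
From mathcomp Require Import reals.
Set Implicit Arguments. Unset Strict Implicit. Unset Printing Implicit Defensive.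
Import Order.TTheory GRing.Theory Num.Theory.

(* Costs have the form w(l_i(S)), where the level l_i(S) is a small natural
   number, monotone in S, and the weights are alpha-separated:
   alpha * w(m) < w(n) whenever m < n.  If l_i(X_i \ e) > l_i(X_j) then
   c_i(X_i \ e) > alpha * c_i(X_j), so refuting alpha-EFX becomes a question
   about levels alone, independent of alpha.  For three agents and six chores
   there are level functions under which each of the 3^6 allocations has such
   a drop, while agent 0 cannot split the chores into three bundles all below
   the top level, so that giving every chore to agent 0 is MMS. *)

Section OrdList.
Variable n : nat.

(* Unlike [enum 'I_n], which is built with the opaque [insub], this list of
   all ordinals evaluates under [vm_compute]. *)
Definition ord_list : seq 'I_n := pmap (@insub_eq _ _ 'I_n) (iota 0 n).

Lemma ord_listE : ord_list = ord_enum n.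
Proof. exact: eq_pmap (@insub_eqE _ _ _) _. Qed.

Lemma mem_ord_list x : x \in ord_list.
Proof. by rewrite ord_listE mem_ord_enum. Qed.

Lemma size_ord_list : size ord_list = n.
Proof. by rewrite -(size_map val) ord_listE val_ord_enum size_iota. Qed.

Lemma nth_ord_list x0 (x : 'I_n) : nth x0 ord_list x = x.
Proof.
apply: val_inj; rewrite -(nth_map x0 0) ?size_ord_list //.
by rewrite ord_listE val_ord_enum nth_iota.
Qed.

End OrdList.

Section LayerLevel.
Variable n : nat.

(* The level of P is the least k such that P is contained in one of the
   index lists of the layer L`_k, and size L if there is no such k. *)
Definition layer_level (L : seq (seq (seq nat))) (P : pred 'I_n) : nat :=
  find (has (fun s => all (fun x => P x ==> (val x \in s)) (ord_list n))) L.

Lemma layer_level_sub L (P Q : pred 'I_n) :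
  subpred P Q -> (layer_level L P <= layer_level L Q)%N.
Proof.
move=> PQ; apply: sub_find => l /hasP[s ls /allP Qs].
apply/hasP; exists s => //; apply/allP => x /Qs Qxs.
by apply/implyP => /PQ /(implyP Qxs).
Qed.

Lemma eq_layer_level L (P Q : pred 'I_n) :
  P =1 Q -> layer_level L P = layer_level L Q.
Proof.
move=> PQ; apply: eq_find => l; apply: eq_has => s.
by apply: eq_all => x; rewrite PQ.
Qed.

Lemma layer_level_pred0 s l L : layer_level ((s :: l) :: L) pred0 = 0%N.
Proof. by rewrite /layer_level /= all_predT. Qed.

End LayerLevel.

Fixpoint words (T : Type) (r : seq T) (k : nat) : seq (seq T) :=
  if k is k'.+1 then [seq x :: w | x <- r, w <- words r k'] else [:: [::]].

Lemma mem_words (T : eqType) (r w : seq T) :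
  all (mem r) w -> w \in words r (size w).
Proof.
elim: w => [|x w IHw] //= /andP[rx /IHw wr].
by apply/allpairsP; exists (x, w).
Qed.

Lemma fun_as_word m k (x0 : 'I_k) (g : 'I_m -> 'I_k) :
  exists2 a, a \in words (ord_list k) m & forall x, g x = nth x0 a x.
Proof.
exists (map g (ord_list m)).
  rewrite -[in words _ _](size_ord_list m) -(size_map g) mem_words //.
  by apply/allP => y _; exact: mem_ord_list.
by move=> x; rewrite (nth_map x) ?nth_ord_list ?size_ord_list.
Qed.

Local Open Scope ring_scope.

Section GapWeight.
Variables (R : realType) (alpha : R).
Hypothesis alpha_ge0 : 0 <= alpha.

Definition gap_weight (k : nat) : R := if k is 0%N then 0 else (alpha + 1) ^+ k.

Lemma gap_weight_ge0 k : 0 <= gap_weight k.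
Proof. by case: k => [|k] //=; rewrite exprn_ge0 // addr_ge0. Qed.

Lemma gap_weight_le m n : (m <= n)%N -> gap_weight m <= gap_weight n.
Proof.
case: m => [|m] lemn; first exact: gap_weight_ge0.
case: n lemn => [//|n] lemn /=.
by rewrite ler_weXn2l // lerDr.
Qed.

Lemma gap_weight_gap m n : (m < n)%N -> alpha * gap_weight m < gap_weight n.
Proof.
case: n => [//|n] ltmn; case: m ltmn => [|m] ltmn /=.
  by rewrite mulr0 exprn_gt0 // ltr_wpDl.
apply: lt_le_trans (_ : (alpha + 1) ^+ m.+2 <= _); last first.
  by rewrite ler_weXn2l // lerDr.
by rewrite [X in _ < X]exprS ltr_pM2r ?exprn_gt0 ?ltrDl // ltr_wpDl.
Qed.

End GapWeight.

Section LevelCosts.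
Variables (R : realType) (alpha : R) (M : finType) (n : nat).
Variable level : 'I_n -> {set M} -> nat.
Hypothesis alpha_ge0 : 0 <= alpha.
Hypothesis level_set0 : forall i, level i set0 = 0%N.
Hypothesis level_subset :
  forall i (S S' : {set M}), S \subset S' -> (level i S <= level i S')%N.

Definition level_costs (i : 'I_n) (S : {set M}) : R :=
  gap_weight alpha (level i S).

Lemma valid_level_costs : valid_costs level_costs.
Proof.
move=> i; split=> [|S|S e]; rewrite /level_costs.
- by rewrite level_set0.
- exact: gap_weight_ge0.
- exact/gap_weight_le/level_subset/subsetUr.
Qed.

Lemma level_drop_not_EFX (X : 'I_n -> {set M}) i j e :
  e \in X i -> (level i (X j) < level i (X i :\ e))%N ->
  ~ alpha_EFX alpha level_costs X.
Proof.
move=> Xie drop efx; have := efx i j e Xie.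
by rewrite leNgt /level_costs gap_weight_gap.
Qed.

End LevelCosts.

Section Bundles.
Variables (M : finType) (n : nat).

Definition bundles (g : M -> 'I_n) (k : 'I_n) : {set M} := [set y | g y == k].

Lemma bundles_partition g : is_partition (bundles g).
Proof.
split=> [i j neq_ij|].
  rewrite -setI_eq0; apply/eqP/setP => y; rewrite !inE.
  by apply/negbTE; apply: contra neq_ij => /andP[/eqP <- /eqP <-].
by apply/setP => y; rewrite inE; apply/bigcupP; exists (g y); rewrite ?inE.
Qed.

Lemma partition_bundles X :
  is_partition X -> exists g : M -> 'I_n, forall k, X k = bundles g k.
Proof.
move=> [disjX coverX].
have /fin_all_exists[g Xg] : forall y, exists k, y \in X k.
  move=> y; have : y \in \bigcup_(k < n) X k by rewrite coverX inE.
  by case/bigcupP=> k _ Xky; exists k.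
exists g => k; apply/setP => y; rewrite inE.
have [<-|neq_gk] := eqVneq (g y) k; first exact: Xg.
exact: disjointFr (disjX _ _ neq_gk) (Xg y).
Qed.

Variables (R : realType) (c : 'I_n -> {set M} -> R).

Lemma le_mms_witness i v :
  (forall Y : 'I_n -> {set M}, is_partition Y -> exists k, v <= c i (Y k)) ->
  le_mms c i v.
Proof.
by move=> wit Y /wit[k le_vk]; exact: le_trans le_vk (le_bigmax _ _ k).
Qed.

Lemma all_to_one_MMS i0 :
  valid_costs c -> le_mms c i0 (c i0 [set: M]) ->
  is_MMS c (bundles (fun=> i0)).
Proof.
move=> valid mms0 i; have [<-|neq_i] := eqVneq i0 i.
  suff -> : bundles (fun=> i0) i0 = [set: M] by [].
  by apply/setP => y; rewrite !inE eqxx.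
have -> : bundles (fun=> i0) i = set0.
  by apply/setP => y; rewrite !inE (negbTE neq_i).
have [-> c_ge0 _] := valid i.
by apply: le_mms_witness => Y _; exists i0; exact: c_ge0.
Qed.

End Bundles.

Definition instance_layers (i : 'I_3) : seq (seq (seq nat)) :=
  match val i with
  | 0%N => [:: [:: [:: 1; 5]; [:: 3; 5]];
               [:: [:: 1; 4]; [:: 3; 4]];
               [:: [:: 0; 4]; [:: 2; 4]; [:: 0; 5]; [:: 2; 5]]]
  | 1%N => [:: [:: [:: 1; 3]; [:: 1; 5]];
               [:: [:: 3; 4]; [:: 4; 5]];
               [:: [:: 0; 1]; [:: 1; 2]; [:: 2; 3]; [:: 0; 4]; [:: 2; 4]]]
  | _ => [:: [:: [:: 1; 3]; [:: 3; 5]];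
             [:: [:: 1; 4]; [:: 4; 5]];
             [:: [:: 0; 1]; [:: 1; 2]; [:: 2; 3]; [:: 0; 5]; [:: 2; 5]]]
  end%N.

Definition instance_level (i : 'I_3) (S : {set 'I_6}) : nat :=
  layer_level (instance_layers i) (fun x => x \in S).

Lemma instance_level_set0 i : instance_level i set0 = 0%N.
Proof.
have E0 : (fun x => x \in set0) =1 @pred0 'I_6 by move=> x; rewrite inE.
rewrite /instance_level (eq_layer_level _ E0) /instance_layers.
by case: (val i) => [|[|?]]; apply: layer_level_pred0.
Qed.

Lemma instance_level_subset i (S S' : {set 'I_6}) :
  S \subset S' -> (instance_level i S <= instance_level i S')%N.
Proof. by move/subsetP=> sSS'; apply: layer_level_sub => x /sSS'. Qed.

Definition word_bundle (a : seq 'I_3) (k : 'I_3) : pred 'I_6 :=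
  fun x => nth ord0 a x == k.

Definition has_level_drop (a : seq 'I_3) : bool :=
  has (fun i => has (fun e => word_bundle a i e && has (fun j =>
    layer_level (instance_layers i) (word_bundle a j) <
    layer_level (instance_layers i) (predD1 (word_bundle a i) e))%N
    (ord_list 3)) (ord_list 6)) (ord_list 3).

Definition has_top_bundle (a : seq 'I_3) : bool :=
  has (fun k => layer_level (instance_layers ord0) (@predT 'I_6) <=
                layer_level (instance_layers ord0) (word_bundle a k))%N
    (ord_list 3).

Lemma words_have_level_drop : all has_level_drop (words (ord_list 3) 6).
Proof. by vm_compute. Qed.

(* Every set of agent-0 level below 3 contains at most one of the chores
   0, 1, 2, 3, so three such bundles cannot cover all six chores. *)
Lemma words_have_top_bundle : all has_top_bundle (words (ord_list 3) 6).
Proof. by vm_compute. Qed.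

Lemma instance_level_drop (g : 'I_6 -> 'I_3) : exists i j e,
  e \in bundles g i /\
  (instance_level i (bundles g j) < instance_level i (bundles g i :\ e))%N.
Proof.
have [a wa ga] := fun_as_word ord0 g.
have /hasP[i _ /hasP[e _ /andP[aei /hasP[j _ drop]]]] :=
  allP words_have_level_drop a wa.
exists i, j, e; split; first by rewrite inE ga.
have Ej : (fun x => x \in bundles g j) =1 word_bundle a j.
  by move=> x; rewrite inE ga.
have Eie : (fun x => x \in bundles g i :\ e) =1 predD1 (word_bundle a i) e.
  by move=> x; rewrite !inE ga.
by rewrite /instance_level (eq_layer_level _ Ej) (eq_layer_level _ Eie).
Qed.

Lemma instance_top_bundle (g : 'I_6 -> 'I_3) : exists k,
  (instance_level ord0 [set: 'I_6] <= instance_level ord0 (bundles g k))%N.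
Proof.
have [a wa ga] := fun_as_word ord0 g.
have /hasP[k _ top_k] := allP words_have_top_bundle a wa.
exists k; rewrite /instance_level.
have ET : (fun x => x \in [set: 'I_6]) =1 predT by move=> x; rewrite inE.
have Ek : (fun x => x \in bundles g k) =1 word_bundle a k.
  by move=> x; rewrite inE ga.
by rewrite (eq_layer_level _ ET) (eq_layer_level _ Ek).
Qed.

Theorem corollary1 (R : realType) (alpha : R) :
  1 <= alpha ->
  exists (M : finType) (c : 'I_3 -> {set M} -> R),
    [/\ valid_costs c,
        (exists X : 'I_3 -> {set M}, is_partition X /\ is_MMS c X) &
        ~ (exists X : 'I_3 -> {set M}, is_partition X /\ alpha_EFX alpha c X)].
Proof.
move=> alpha_ge1; have alpha_ge0 : 0 <= alpha := le_trans ler01 alpha_ge1.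
have valid :=
  valid_level_costs alpha_ge0 instance_level_set0 instance_level_subset.
exists 'I_6, (level_costs alpha instance_level); split=> //.
  exists (bundles (fun=> ord0)); split; first exact: bundles_partition.
  apply: all_to_one_MMS => //.
  apply: le_mms_witness => Y /partition_bundles[g Yg].
  have [k lek] := instance_top_bundle g.
  by exists k; rewrite Yg; exact: gap_weight_le.
case=> X [/partition_bundles[g Xg] efx].
have [i [j [e []]]] := instance_level_drop g; rewrite -!Xg => Xie drop.
exact: level_drop_not_EFX Xie drop efx.
Qed.
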